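(* Let $M$ be a $\lambda\mu$-term. If $\Gamma \vdash M : \delta \mid \Delta$ is derivable in the intersection type system described in the context, for some basis $\Gamma$, name context $\Delta$ and type $\delta \in \mathcal{T}_D$, then $M$ is strongly normalising.
   Context: $\lambda\mu$-calculus (Parigot). Fix disjoint denumerable sets of term variables $x,y,\dots$ and names $\alpha,\beta,\dots$. Terms and commands: $M,N ::= x \mid \lambda x.M \mid MN \mid \mu\alpha.C$ and $C ::= [\alpha]M$; $\lambda$ binds $x$, $\mu$ binds $\alpha$; terms are taken up to renaming of bound variables/names, with bound and free variables/names assumed distinct. $M[N/x]$ is capture-avoiding substitution. Structural substitution $T[\alpha \Leftarrow L]$ ($T$ a term or command): $([\alpha]M)[\alpha\Leftarrow L] = [\alpha](M[\alpha\Leftarrow L])L$; $([\beta]M)[\alpha\Leftarrow L]=[\beta](M[\alpha\Leftarrow L])$ if $\beta\neq\alpha$; $(\mu\beta.C)[\alpha\Leftarrow L]=\mu\beta.(C[\alpha\Leftarrow L])$; $x[\alpha\Leftarrow L]=x$; $(\lambda x.M)[\alpha\Leftarrow L]=\lambda x.(M[\alpha\Leftarrow L])$; $(MN)[\alpha\Leftarrow L]=(M[\alpha\Leftarrow L])(N[\alpha\Leftarrow L])$. Reduction $\to$ is the compatible closure of $(\lambda x.M)N \to M[N/x]$ and $(\mu\beta.C)N \to \mu\beta.(C[\beta\Leftarrow N])$. A term is strongly normalising if it admits no infinite reduction sequence. Types. With a single type constant $\nu$ and a symbol $\omega$ (which is not itself a type): $\mathcal{T}_D:\ \delta ::= \nu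 \mid \omega\to\nu \mid \kappa\to\nu \mid \delta\wedge\delta$; $\mathcal{T}_C:\ \kappa ::= \delta\times\omega \mid \delta\times\kappa \mid \kappa\wedge\kappa$ ($\times$ associates to the right). The relations $\le$ on $\mathcal{T}_D$ and on $\mathcal{T}_C$ are the least preorders such that: $\sigma\wedge\tau\le\sigma$; $\sigma\wedge\tau\le\tau$; $\nu\le\omega\to\nu$; $\omega\to\nu\le\nu$; $\delta_1\times\delta_2\times\omega\le\delta_1\times\omega$; $(\delta_1\times\omega)\wedge(\delta_2\times\kappa)\le(\delta_1\wedge\delta_2)\times\kappa$; $(\delta_1\times\kappa_1)\wedge(\delta_2\times\kappa_2)\le(\delta_1\wedge\delta_2)\times(\kappa_1\wedge\kappa_2)$; if $\delta_1\le\delta_2$ then $\delta_1\times\omega\le\delta_2\times\omega$; if $\delta_1\le\delta_2$ and $\kappa_1\le\kappa_2$ then $\delta_1\times\kappa_1\le\delta_2\times\kappa_2$; if $\sigma\le\tau_1$ and $\sigma\le\tau_2$ then $\sigma\le\tau_1\wedge\tau_2$; if $\kappa_2\le\kappa_1$ then $\kappa_1\to\nu\le\kappa_2\to\nu$. Typing. A basis $\Gamma$ is a finite map from term variables to $\mathcal{T}_D$, a name context $\Delta$ a finite map from names to $\mathcal{T}_C$; judgements are $\Gamma\vdash M:\delta\mid\Delta$, with the convention that variables of $\Gamma$ and names of $\Delta$ do not occur bound in $M$. Rules: (ax) $\Gamma,x{:}\delta\vdash x:\delta\mid\Delta$; (abs) from $\Gamma,x{:}\delta\vdash M:\kappa\to\nu\mid\Delta$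 infer $\Gamma\vdash\lambda x.M:\delta\times\kappa\to\nu\mid\Delta$; (app) from $\Gamma\vdash M:\delta\times\kappa\to\nu\mid\Delta$ and $\Gamma\vdash N:\delta\mid\Delta$ infer $\Gamma\vdash MN:\kappa\to\nu\mid\Delta$ (in (abs) and (app), $\kappa$ is either in $\mathcal{T}_C$ or is $\omega$); ($\mu$) from $\Gamma\vdash M:\kappa'\to\nu\mid\alpha{:}\kappa,\beta{:}\kappa',\Delta$ infer $\Gamma\vdash\mu\alpha.[\beta]M:\kappa\to\nu\mid\beta{:}\kappa',\Delta$ (for $\beta\ne\alpha$), and from $\Gamma\vdash M:\kappa\to\nu\mid\alpha{:}\kappa,\Delta$ infer $\Gamma\vdash\mu\alpha.[\alpha]M:\kappa\to\nu\mid\Delta$; ($\le$) from $\Gamma\vdash M:\delta\mid\Delta$ and $\delta\le\delta'$ infer $\Gamma\vdash M:\delta'\mid\Delta$; ($\wedge$) from $\Gamma\vdash M:\delta\mid\Delta$ and $\Gamma\vdash M:\delta'\mid\Delta$ infer $\Gamma\vdash M:\delta\wedge\delta'\mid\Delta$. *)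

(* lambda-mu calculus with de Bruijn indices (terms up to
   alpha-conversion), separate index spaces for term variables and names. *)
From Stdlib Require Import List Arith.
Import ListNotations.

(* Since every command has the form [b]M and commands only occur under mu,
   the term  mu alpha.[beta]M  is represented as  Mu b M , where alpha is the
   name index 0 inside, and b is the (de Bruijn) name index of beta inside the
   binder (b = 0 means beta = alpha). *)
Inductive term : Type :=
| Var : nat -> term
| Lam : term -> term
| App : term -> term -> term
| Mu  : nat -> term -> term.

Fixpoint lift_t (c : nat) (M : term) : term :=
  match M with
  | Var x => if c <=? x then Var (S x) else Var x
  | Lam P => Lam (lift_t (S c) P)
  | App P Q => App (lift_t c P) (lift_t c Q)
  | Mu b P => Mu b (lift_t c P)
  end.

Fixpoint lift_n (c : nat) (M : term) : term :=
  match M with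
  | Var x => Var x
  | Lam P => Lam (lift_n c P)
  | App P Q => App (lift_n c P) (lift_n c Q)
  | Mu b P => Mu (if S c <=? b then S b else b) (lift_n (S c) P)
  end.

Fixpoint subst (j : nat) (N : term) (M : term) : term :=
  match M with
  | Var x => if x =? j then N else if j <? x then Var (pred x) else Var x
  | Lam P => Lam (subst (S j) (lift_t 0 N) P)
  | App P Q => App (subst j N P) (subst j N Q)
  | Mu b P => Mu b (subst j (lift_n 0 N) P)
  end.

Fixpoint ssub (a : nat) (N : term) (M : term) : term :=
  match M with
  | Var x => Var x
  | Lam P => Lam (ssub a (lift_t 0 N) P)
  | App P Q => App (ssub a N P) (ssub a N Q)
  | Mu b P =>
      let N' := lift_n 0 N in
      let P' := ssub (S a) N' P in
      if b =? S a then Mu b (App P' N') else Mu b P'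
  end.

Inductive step : term -> term -> Prop :=
| step_beta : forall M N, step (App (Lam M) N) (subst 0 N M)
| step_mu : forall b P N,
    let N' := lift_n 0 N in
    let P' := ssub 0 N' P in
    step (App (Mu b P) N) (Mu b (if b =? 0 then App P' N' else P'))
| step_lam : forall M M', step M M' -> step (Lam M) (Lam M')
| step_appl : forall M M' N, step M M' -> step (App M N) (App M' N)
| step_appr : forall M N N', step N N' -> step (App M N) (App M N')
| step_mu_body : forall b M M', step M M' -> step (Mu b M) (Mu b M').

Definition SN (M : term) : Prop := Acc (fun N M => step M N) M.

(* Types. T_D:  nu | omega -> nu | kappa -> nu | delta /\ delta
          T_C:  delta x omega | delta x kappa | kappa /\ kappa *)
Inductive dty : Type :=
| Nu : dty
| ArrO : dty
| Arr : cty -> dty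
| DMeet : dty -> dty -> dty
with cty : Type :=
| PairO : dty -> cty
| Pair : dty -> cty -> cty
| CMeet : cty -> cty -> cty.

Inductive dle : dty -> dty -> Prop :=
| dle_refl : forall d, dle d d
| dle_trans : forall d1 d2 d3, dle d1 d2 -> dle d2 d3 -> dle d1 d3
| dle_meet_l : forall d1 d2, dle (DMeet d1 d2) d1
| dle_meet_r : forall d1 d2, dle (DMeet d1 d2) d2
| dle_nu_arrO : dle Nu ArrO
| dle_arrO_nu : dle ArrO Nu
| dle_glb : forall s t1 t2, dle s t1 -> dle s t2 -> dle s (DMeet t1 t2)
| dle_arr : forall k1 k2, cle k2 k1 -> dle (Arr k1) (Arr k2)
with cle : cty -> cty -> Prop :=
| cle_refl : forall k, cle k k
| cle_trans : forall k1 k2 k3, cle k1 k2 -> cle k2 k3 -> cle k1 k3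
| cle_meet_l : forall k1 k2, cle (CMeet k1 k2) k1
| cle_meet_r : forall k1 k2, cle (CMeet k1 k2) k2
| cle_drop : forall d1 d2, cle (Pair d1 (PairO d2)) (PairO d1)
| cle_distO : forall d1 d2 k,
    cle (CMeet (PairO d1) (Pair d2 k)) (Pair (DMeet d1 d2) k)
| cle_dist : forall d1 d2 k1 k2,
    cle (CMeet (Pair d1 k1) (Pair d2 k2)) (Pair (DMeet d1 d2) (CMeet k1 k2))
| cle_pairO : forall d1 d2, dle d1 d2 -> cle (PairO d1) (PairO d2)
| cle_pair : forall d1 d2 k1 k2, dle d1 d2 -> cle k1 k2 ->
    cle (Pair d1 k1) (Pair d2 k2)
| cle_glb : forall s t1 t2, cle s t1 -> cle s t2 -> cle s (CMeet t1 t2).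

(* Typing  Gamma |- M : delta | Delta.  Gamma (resp. Delta) is a finite map
   whose domain is an initial segment of the de Bruijn term-variable
   (resp. name) indices. *)
Inductive typed : list dty -> term -> dty -> list cty -> Prop :=
| t_ax : forall G D x d, nth_error G x = Some d -> typed G (Var x) d D
| t_abs : forall G D d k M,
    typed (d :: G) M (Arr k) D -> typed G (Lam M) (Arr (Pair d k)) D
| t_absO : forall G D d M,
    typed (d :: G) M ArrO D -> typed G (Lam M) (Arr (PairO d)) D
| t_app : forall G D d k M N,
    typed G M (Arr (Pair d k)) D -> typed G N d D -> typed G (App M N) (Arr k) D
| t_appO : forall G D d M N,
    typed G M (Arr (PairO d)) D -> typed G N d D -> typed G (App M N) ArrO D
| t_mu : forall G D b k k' M,
    nth_error D b = Some k' ->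
    typed G M (Arr k') (k :: D) -> typed G (Mu (S b) M) (Arr k) D
| t_mu_self : forall G D k M,
    typed G M (Arr k) (k :: D) -> typed G (Mu 0 M) (Arr k) D
| t_le : forall G D M d d', typed G M d D -> dle d d' -> typed G M d' D
| t_meet : forall G D M d d',
    typed G M d D -> typed G M d' D -> typed G M (DMeet d d') D.

(* Reducibility with stacks, after Parigot, adapted to intersection types.
   A type [delta] denotes the terms that are strongly normalising against
   every argument stack in the set denoted by its [kappa], after any renaming
   of variables and names.  These sets contain all variables, contain only
   strongly normalising terms, and subtyping is inclusion.  A typable term is
   in the set of its type after any instantiation of its variables by members
   of their sets which also appends, to each command [[alpha]N], a stack from
   the set of [alpha]: firing [(mu alpha.C) N1 ... Nk] appends exactly such a
   stack, so the mu-rules are sound for this reading. *)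
From Stdlib Require Import List Arith Lia Relations Transitive_Closure.
Import ListNotations.

Definition apps (M : term) (s : list term) : term := fold_left App s M.

Lemma apps_app s t M : apps M (s ++ t) = apps (apps M s) t.
Proof. apply fold_left_app. Qed.

Lemma apps_snoc s N M : apps M (s ++ [N]) = App (apps M s) N.
Proof. apply apps_app. Qed.

Lemma apps_App_is_App s P Q : exists A B, apps (App P Q) s = App A B.
Proof. revert P Q; induction s; [simpl; eauto | intros; apply IHs]. Qed.

(** * Simultaneous instantiation *)

(* [inst σ θ τ M] substitutes [σ x] for each term variable [x], renames each
   name [n] into [θ n], and turns each command [[n]P] into
   [[θ n](P (τ n)_1 ... (τ n)_k)].  Structural substitution is the case
   [τ = single_stk a N]. *)
Definition up_lam_sub (σ : nat -> term) : nat -> term :=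
  fun x => match x with 0 => Var 0 | S y => lift_t 0 (σ y) end.
Definition up_mu_sub (σ : nat -> term) : nat -> term :=
  fun x => lift_n 0 (σ x).
Definition up_ren (θ : nat -> nat) : nat -> nat :=
  fun n => match n with 0 => 0 | S m => S (θ m) end.
Definition up_lam_stk (τ : nat -> list term) : nat -> list term :=
  fun n => map (lift_t 0) (τ n).
Definition up_mu_stk (τ : nat -> list term) : nat -> list term :=
  fun n => match n with 0 => [] | S m => map (lift_n 0) (τ m) end.

Fixpoint inst (σ : nat -> term) (θ : nat -> nat) (τ : nat -> list term)
    (M : term) : term :=
  match M with
  | Var x => σ x
  | Lam P => Lam (inst (up_lam_sub σ) θ (up_lam_stk τ) P)
  | App P Q => App (inst σ θ τ P) (inst σ θ τ Q)
  | Mu b P =>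
      Mu (up_ren θ b)
         (apps (inst (up_mu_sub σ) (up_ren θ) (up_mu_stk τ) P) (up_mu_stk τ b))
  end.

Lemma inst_apps s σ θ τ M :
  inst σ θ τ (apps M s) = apps (inst σ θ τ M) (map (inst σ θ τ) s).
Proof. revert M; induction s as [|N s IH]; intros M; [reflexivity | apply (IH (App M N))]. Qed.

Lemma inst_ext M σ σ' θ θ' τ τ' :
  (forall x, σ x = σ' x) -> (forall n, θ n = θ' n) -> (forall n, τ n = τ' n) ->
  inst σ θ τ M = inst σ' θ' τ' M.
Proof.
  revert σ σ' θ θ' τ τ'.
  induction M as [x|P IH|P IHP Q IHQ|b P IH]; intros σ σ' θ θ' τ τ' Hσ Hθ Hτ; simpl.
  - apply Hσ.
  - f_equal; apply IH.
    + intros [|x]; simpl; [reflexivity | now rewrite Hσ].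
    + exact Hθ.
    + intros n; unfold up_lam_stk; now rewrite Hτ.
  - now rewrite (IHP σ σ' θ θ' τ τ'), (IHQ σ σ' θ θ' τ τ').
  - assert (Hθ' : forall n, up_ren θ n = up_ren θ' n)
      by (intros [|n]; simpl; now rewrite ?Hθ).
    assert (Hτ' : forall n, up_mu_stk τ n = up_mu_stk τ' n)
      by (intros [|n]; simpl; now rewrite ?Hτ).
    rewrite Hθ', Hτ', (IH _ (up_mu_sub σ') _ (up_ren θ') _ (up_mu_stk τ')); auto.
    intros x; unfold up_mu_sub; now rewrite Hσ.
Qed.

Definition no_stk : nat -> list term := fun _ => [].

Definition ren (ξ θ : nat -> nat) : term -> term :=
  inst (fun x => Var (ξ x)) θ no_stk.

Lemma ren_ext M ξ ξ' θ θ' :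
  (forall x, ξ x = ξ' x) -> (forall n, θ n = θ' n) -> ren ξ θ M = ren ξ' θ' M.
Proof. intros Hξ Hθ; apply inst_ext; intros; now rewrite ?Hξ. Qed.

Lemma ren_Var ξ θ x : ren ξ θ (Var x) = Var (ξ x).
Proof. reflexivity. Qed.

Lemma ren_App ξ θ P Q : ren ξ θ (App P Q) = App (ren ξ θ P) (ren ξ θ Q).
Proof. reflexivity. Qed.

Lemma ren_Lam ξ θ P : ren ξ θ (Lam P) = Lam (ren (up_ren ξ) θ P).
Proof. unfold ren; simpl; f_equal; apply inst_ext; now intros [|x]. Qed.

Lemma ren_Mu ξ θ b P : ren ξ θ (Mu b P) = Mu (up_ren θ b) (ren ξ (up_ren θ) P).
Proof.
  unfold ren; simpl.
  replace (up_mu_stk no_stk b) with (@nil term) by now destruct b.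
  f_equal; apply inst_ext; now intros [|x].
Qed.

Lemma ren_apps s ξ θ M : ren ξ θ (apps M s) = apps (ren ξ θ M) (map (ren ξ θ) s).
Proof. apply inst_apps. Qed.

Lemma ren_ren M ξ1 θ1 ξ2 θ2 :
  ren ξ2 θ2 (ren ξ1 θ1 M) = ren (fun x => ξ2 (ξ1 x)) (fun n => θ2 (θ1 n)) M.
Proof.
  revert ξ1 θ1 ξ2 θ2; induction M as [x|P IH|P IHP Q IHQ|b P IH]; intros.
  - reflexivity.
  - rewrite !ren_Lam, IH; f_equal; apply ren_ext; now intros [|x].
  - now rewrite !ren_App, IHP, IHQ.
  - rewrite !ren_Mu, IH; f_equal; [now destruct b | apply ren_ext; now intros [|x]].
Qed.

Lemma inst_id M : inst (fun x => Var x) (fun n => n) no_stk M = M.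
Proof.
  induction M as [x|P IH|P IHP Q IHQ|b P IH]; simpl.
  - reflexivity.
  - f_equal; rewrite <- IH at 2; apply inst_ext; now intros [|x].
  - now rewrite IHP, IHQ.
  - replace (up_mu_stk no_stk b) with (@nil term) by now destruct b.
    f_equal; [now destruct b|].
    rewrite <- IH at 2; apply inst_ext; now intros [|x].
Qed.

Lemma ren_id M : ren (fun x => x) (fun n => n) M = M.
Proof. apply inst_id. Qed.

Definition shift (c : nat) : nat -> nat := fun x => if c <=? x then S x else x.

Lemma lift_t_ren M c : lift_t c M = ren (shift c) (fun n => n) M.
Proof.
  revert c; induction M as [x|P IH|P IHP Q IHQ|b P IH]; intros c.
  - simpl; rewrite ren_Var; unfold shift; now destruct (c <=? x).
  - simpl; rewrite ren_Lam, IH; f_equal; apply ren_ext; [|reflexivity].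
    intros [|x]; unfold shift; simpl; [reflexivity | now destruct (c <=? x)].
  - simpl; now rewrite ren_App, IHP, IHQ.
  - simpl; rewrite ren_Mu, IH; f_equal; [now destruct b | apply ren_ext; now intros [|x]].
Qed.

Lemma lift_n_ren M c : lift_n c M = ren (fun x => x) (shift c) M.
Proof.
  revert c; induction M as [x|P IH|P IHP Q IHQ|b P IH]; intros c.
  - reflexivity.
  - simpl; rewrite ren_Lam, IH; f_equal; apply ren_ext; now intros [|x].
  - simpl; now rewrite ren_App, IHP, IHQ.
  - simpl; rewrite ren_Mu, IH; f_equal.
    + unfold shift; destruct b as [|b]; simpl; [reflexivity | now destruct (c <=? b)].
    + apply ren_ext; [reflexivity|].
      intros [|x]; unfold shift; simpl; [reflexivity | now destruct (c <=? x)].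
Qed.

Lemma ren_inst M ξ' θ' σ θ τ :
  ren ξ' θ' (inst σ θ τ M) =
  inst (fun x => ren ξ' θ' (σ x)) (fun n => θ' (θ n)) (fun n => map (ren ξ' θ') (τ n)) M.
Proof.
  revert ξ' θ' σ θ τ; induction M as [x|P IH|P IHP Q IHQ|b P IH]; intros.
  - reflexivity.
  - simpl inst; rewrite ren_Lam, IH; f_equal; apply inst_ext; [| reflexivity |].
    + intros [|x]; simpl; [reflexivity|].
      now rewrite !lift_t_ren, !ren_ren; apply ren_ext.
    + intros n; unfold up_lam_stk; rewrite !map_map; apply map_ext; intros N.
      now rewrite !lift_t_ren, !ren_ren; apply ren_ext.
  - simpl inst; now rewrite ren_App, IHP, IHQ.
  - simpl inst; rewrite ren_Mu, ren_apps, IH.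
    assert (Hτ : forall n, map (ren ξ' (up_ren θ')) (up_mu_stk τ n) =
                           up_mu_stk (fun m => map (ren ξ' θ') (τ m)) n).
    { intros [|n]; simpl; [reflexivity|]; rewrite !map_map; apply map_ext; intros N.
      now rewrite !lift_n_ren, !ren_ren; apply ren_ext. }
    rewrite Hτ; f_equal; [now destruct b|]; f_equal; apply inst_ext; auto.
    + intros x; unfold up_mu_sub; now rewrite !lift_n_ren, !ren_ren; apply ren_ext.
    + now intros [|n].
Qed.

Lemma inst_ren M σ θ τ ξ' θ' :
  inst σ θ τ (ren ξ' θ' M) =
  inst (fun x => σ (ξ' x)) (fun n => θ (θ' n)) (fun n => τ (θ' n)) M.
Proof.
  revert σ θ τ ξ' θ'; induction M as [x|P IH|P IHP Q IHQ|b P IH]; intros.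
  - reflexivity.
  - rewrite ren_Lam; simpl; rewrite IH; f_equal; apply inst_ext; now intros [|x].
  - rewrite ren_App; simpl; now rewrite IHP, IHQ.
  - rewrite ren_Mu; simpl; rewrite IH.
    replace (up_mu_stk τ (up_ren θ' b)) with (up_mu_stk (fun n => τ (θ' n)) b)
      by now destruct b.
    f_equal; [now destruct b|]; f_equal; apply inst_ext; now intros [|x].
Qed.

Lemma lift_t_inst X σ θ τ :
  lift_t 0 (inst σ θ τ X) = inst (up_lam_sub σ) θ (up_lam_stk τ) (lift_t 0 X).
Proof.
  rewrite !lift_t_ren, ren_inst, inst_ren; apply inst_ext; intros; try reflexivity.
  - simpl; now rewrite lift_t_ren.
  - unfold up_lam_stk; apply map_ext; intros; now rewrite lift_t_ren.
Qed.

Lemma lift_n_inst X σ θ τ :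
  lift_n 0 (inst σ θ τ X) = inst (up_mu_sub σ) (up_ren θ) (up_mu_stk τ) (lift_n 0 X).
Proof.
  rewrite !lift_n_ren, ren_inst, inst_ren; apply inst_ext; intros; try reflexivity.
  - unfold up_mu_sub; now rewrite lift_n_ren.
  - simpl; apply map_ext; intros; now rewrite lift_n_ren.
Qed.

Definition comp_stk σ2 θ2 τ2 (θ1 : nat -> nat) (τ1 : nat -> list term) :=
  fun n => map (inst σ2 θ2 τ2) (τ1 n) ++ τ2 (θ1 n).

Lemma up_mu_stk_comp σ2 θ2 τ2 θ1 τ1 n :
  map (inst (up_mu_sub σ2) (up_ren θ2) (up_mu_stk τ2)) (up_mu_stk τ1 n)
    ++ up_mu_stk τ2 (up_ren θ1 n) =
  up_mu_stk (comp_stk σ2 θ2 τ2 θ1 τ1) n.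
Proof.
  destruct n; simpl; [reflexivity|]; unfold comp_stk.
  rewrite map_app, !map_map; f_equal; apply map_ext; intros; now rewrite lift_n_inst.
Qed.

Lemma inst_inst M σ1 θ1 τ1 σ2 θ2 τ2 :
  inst σ2 θ2 τ2 (inst σ1 θ1 τ1 M) =
  inst (fun x => inst σ2 θ2 τ2 (σ1 x)) (fun n => θ2 (θ1 n)) (comp_stk σ2 θ2 τ2 θ1 τ1) M.
Proof.
  revert σ1 θ1 τ1 σ2 θ2 τ2; induction M as [x|P IH|P IHP Q IHQ|b P IH]; intros.
  - reflexivity.
  - simpl; rewrite IH; f_equal; apply inst_ext; [| reflexivity |].
    + intros [|x]; simpl; [reflexivity | now rewrite lift_t_inst].
    + intros n; unfold comp_stk, up_lam_stk; rewrite map_app, !map_map; f_equal.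
      apply map_ext; intros; now rewrite lift_t_inst.
  - simpl; now rewrite IHP, IHQ.
  - simpl; rewrite inst_apps, <- apps_app, IH, up_mu_stk_comp.
    f_equal; [now destruct b|]; f_equal; apply inst_ext.
    + intros x; unfold up_mu_sub; now rewrite lift_n_inst.
    + now intros [|n].
    + intros n; unfold comp_stk at 1; now rewrite up_mu_stk_comp.
Qed.

Definition subst_sub (j : nat) (N : term) : nat -> term :=
  fun x => if x =? j then N else if j <? x then Var (pred x) else Var x.
Definition single_stk (a : nat) (N : term) : nat -> list term :=
  fun n => if n =? a then [N] else [].
Arguments subst_sub : simpl never.
Arguments single_stk : simpl never.

Lemma subst_as_inst M j N : subst j N M = inst (subst_sub j N) (fun n => n) no_stk M.
Proof.
  revert j N; induction M as [x|P IH|P IHP Q IHQ|b P IH]; intros j N.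
  - reflexivity.
  - simpl; rewrite IH; f_equal; apply inst_ext; [| reflexivity | reflexivity].
    intros [|x]; [reflexivity|]; unfold subst_sub; simpl up_lam_sub.
    destruct (Nat.eqb_spec (S x) (S j)), (Nat.eqb_spec x j); try lia; [reflexivity|].
    destruct (Nat.ltb_spec (S j) (S x)), (Nat.ltb_spec j x); try lia; [|reflexivity].
    destruct x; [lia | reflexivity].
  - simpl; now rewrite IHP, IHQ.
  - simpl; rewrite IH.
    replace (up_mu_stk no_stk b) with (@nil term) by now destruct b.
    f_equal; [now destruct b|]; apply inst_ext; [| now intros [|n] ..].
    intros x; unfold up_mu_sub, subst_sub.
    destruct (x =? j); [reflexivity|]; now destruct (j <? x).
Qed.

Lemma ssub_as_inst M a N : ssub a N M = inst (fun x => Var x) (fun n => n) (single_stk a N) M.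
Proof.
  revert a N; induction M as [x|P IH|P IHP Q IHQ|b P IH]; intros a N.
  - reflexivity.
  - simpl; rewrite IH; f_equal; apply inst_ext; [now intros [|x] | reflexivity |].
    intros n; unfold up_lam_stk, single_stk; now destruct (n =? a).
  - simpl; now rewrite IHP, IHQ.
  - simpl; rewrite IH.
    assert (Hτ : forall n, up_mu_stk (single_stk a N) n = single_stk (S a) (lift_n 0 N) n)
      by (intros [|n]; unfold single_stk; simpl; [reflexivity | now destruct (n =? a)]).
    rewrite (inst_ext P (up_mu_sub (fun x => Var x)) (fun x => Var x)
               (up_ren (fun n => n)) (fun n => n) _ _ (fun x => eq_refl)
               ltac:(now intros [|n]) Hτ), Hτ.
    destruct b as [|b]; unfold single_stk; simpl; [reflexivity | now destruct (b =? a)].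
Qed.

Lemma lift_t_as_inst X : lift_t 0 X = inst (fun x => Var (S x)) (fun n => n) no_stk X.
Proof. now rewrite lift_t_ren. Qed.

Lemma lift_n_as_inst X : lift_n 0 X = inst (fun x => Var x) S no_stk X.
Proof. now rewrite lift_n_ren. Qed.

Lemma subst_lift_t Y N : subst 0 N (lift_t 0 Y) = Y.
Proof.
  rewrite subst_as_inst, lift_t_as_inst, inst_inst; rewrite <- (inst_id Y) at 2.
  now apply inst_ext.
Qed.

Lemma ssub_lift_n Y N : ssub 0 N (lift_n 0 Y) = lift_n 0 Y.
Proof. rewrite ssub_as_inst, !lift_n_as_inst, inst_inst; now apply inst_ext. Qed.

Lemma map_ssub_lift_n l N : map (ssub 0 N) (map (lift_n 0) l) = map (lift_n 0) l.
Proof. rewrite map_map; apply map_ext; intros; apply ssub_lift_n. Qed.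

Lemma ssub_apps s a N M : ssub a N (apps M s) = apps (ssub a N M) (map (ssub a N) s).
Proof.
  rewrite !ssub_as_inst, inst_apps; f_equal; apply map_ext; intros; now rewrite ssub_as_inst.
Qed.

Definition scons (N : term) (σ : nat -> term) : nat -> term :=
  fun x => match x with 0 => N | S y => σ y end.

Lemma subst_inst_up_lam M N σ θ τ :
  subst 0 N (inst (up_lam_sub σ) θ (up_lam_stk τ) M) = inst (scons N σ) θ τ M.
Proof.
  rewrite subst_as_inst, inst_inst; apply inst_ext; [| reflexivity |].
  - intros [|x]; simpl; [reflexivity | rewrite <- subst_as_inst; apply subst_lift_t].
  - intros n; unfold comp_stk, up_lam_stk, no_stk; rewrite app_nil_r, map_map.
    rewrite <- (map_id (τ n)) at 2; apply map_ext; intros.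
    rewrite <- subst_as_inst; apply subst_lift_t.
Qed.

Lemma ssub_inst_up_mu P N σ θ τ :
  ssub 0 (lift_n 0 (inst σ θ τ N)) (inst (up_mu_sub σ) (up_ren θ) (up_mu_stk τ) P) =
  inst (up_mu_sub σ) (up_ren θ) (up_mu_stk τ) (ssub 0 (lift_n 0 N) P).
Proof.
  rewrite !ssub_as_inst, !inst_inst; apply inst_ext; [| reflexivity |].
  - intros x; simpl; unfold up_mu_sub; rewrite <- ssub_as_inst; apply ssub_lift_n.
  - intros [|n]; unfold comp_stk; simpl; [now rewrite lift_n_inst|].
    rewrite app_nil_r, map_map; apply map_ext; intros.
    rewrite <- ssub_as_inst; apply ssub_lift_n.
Qed.

(** * Reduction *)

Notation steps := (clos_refl_trans term step).

Definition mu_fire (b : nat) (P N : term) : term :=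
  if b =? 0 then App (ssub 0 (lift_n 0 N) P) (lift_n 0 N) else ssub 0 (lift_n 0 N) P.

Lemma step_mu_fire b P N : step (App (Mu b P) N) (Mu b (mu_fire b P N)).
Proof. exact (step_mu b P N). Qed.

Lemma steps_map (f : term -> term) :
  (forall M N, step M N -> step (f M) (f N)) -> forall M N, steps M N -> steps (f M) (f N).
Proof. intros Hf M N H; induction H; eauto using rt_step, rt_refl, rt_trans. Qed.

Lemma step_apps_head s M M' : step M M' -> step (apps M s) (apps M' s).
Proof. revert M M'; induction s; intros; simpl; auto using step_appl. Qed.

Lemma steps_App M M' N N' : steps M M' -> steps N N' -> steps (App M N) (App M' N').
Proof.
  intros HM HN; apply rt_trans with (App M' N).
  - apply (steps_map (fun z => App z N)); auto using step_appl.
  - apply (steps_map (App M')); auto using step_appr.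
Qed.

Lemma steps_apps_args M s s' : Forall2 steps s s' -> steps (apps M s) (apps M s').
Proof.
  intros H; revert M; induction H as [|N N' s s' HN _ IH]; intros M; simpl.
  - apply rt_refl.
  - apply rt_trans with (apps (App M N') s); [|apply IH].
    apply (steps_map (fun z => apps z s)); auto using step_apps_head.
    apply steps_App; auto using rt_refl.
Qed.

Lemma mu_fire_inst b P N σ θ τ :
  mu_fire (up_ren θ b) (apps (inst (up_mu_sub σ) (up_ren θ) (up_mu_stk τ) P)
                                (up_mu_stk τ b)) (inst σ θ τ N) =
  apps (inst (up_mu_sub σ) (up_ren θ) (up_mu_stk τ) (mu_fire b P N)) (up_mu_stk τ b).
Proof.
  unfold mu_fire; destruct b as [|b]; simpl.
  - now rewrite ssub_inst_up_mu, lift_n_inst.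
  - now rewrite ssub_apps, map_ssub_lift_n, ssub_inst_up_mu.
Qed.

Lemma step_inst M M' σ θ τ : step M M' -> step (inst σ θ τ M) (inst σ θ τ M').
Proof.
  intros H; revert σ θ τ; induction H; intros σ θ τ; simpl.
  - replace (inst σ θ τ (subst 0 N M))
      with (subst 0 (inst σ θ τ N) (inst (up_lam_sub σ) θ (up_lam_stk τ) M)).
    + apply step_beta.
    + rewrite subst_inst_up_lam, subst_as_inst, inst_inst; apply inst_ext; now intros [|x].
  - unfold P', N'; fold (mu_fire b P N); rewrite <- mu_fire_inst; apply step_mu_fire.
  - now apply step_lam.
  - now apply step_appl.
  - now apply step_appr.
  - now apply step_mu_body, step_apps_head.
Qed.

Lemma steps_inst M M' σ θ τ : steps M M' -> steps (inst σ θ τ M) (inst σ θ τ M').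
Proof. apply steps_map; intros; now apply step_inst. Qed.

Lemma Forall2_steps_map (f : term -> term) l l' :
  (forall M N, steps M N -> steps (f M) (f N)) ->
  Forall2 steps l l' -> Forall2 steps (map f l) (map f l').
Proof. intros Hf H; induction H; simpl; auto. Qed.

Lemma inst_steps_env M σ σ' θ τ τ' :
  (forall x, steps (σ x) (σ' x)) -> (forall n, Forall2 steps (τ n) (τ' n)) ->
  steps (inst σ θ τ M) (inst σ' θ τ' M).
Proof.
  revert σ σ' θ τ τ'; induction M as [x|P IH|P IHP Q IHQ|b P IH];
    intros σ σ' θ τ τ' Hσ Hτ; simpl.
  - apply Hσ.
  - apply (steps_map Lam); [apply step_lam|]; apply IH.
    + intros [|x]; simpl; [apply rt_refl|].
      rewrite !lift_t_as_inst; now apply steps_inst.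
    + intros n; unfold up_lam_stk; apply Forall2_steps_map; auto.
      intros; rewrite !lift_t_as_inst; now apply steps_inst.
  - apply steps_App; [apply IHP | apply IHQ]; auto.
  - apply (steps_map (Mu _)); [apply step_mu_body|].
    assert (Hτ' : forall n, Forall2 steps (up_mu_stk τ n) (up_mu_stk τ' n)).
    { intros [|n]; simpl; auto; apply Forall2_steps_map; auto.
      intros; rewrite !lift_n_as_inst; now apply steps_inst. }
    apply rt_trans with (apps (inst (up_mu_sub σ') (up_ren θ) (up_mu_stk τ') P)
                              (up_mu_stk τ b)); [|now apply steps_apps_args].
    apply (steps_map (fun z => apps z _)); [intros; now apply step_apps_head|].
    apply IH; auto.
    intros x; unfold up_mu_sub; rewrite !lift_n_as_inst; now apply steps_inst.
Qed.

(** * Strong normalisation *)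

Inductive stack_step : list term -> list term -> Prop :=
| stack_step_here N N' s : step N N' -> stack_step (N :: s) (N' :: s)
| stack_step_there N s s' : stack_step s s' -> stack_step (N :: s) (N :: s').

Definition SN_stack (s : list term) : Prop := Acc (fun s' s => stack_step s s') s.

Lemma SN_step M M' : SN M -> step M M' -> SN M'.
Proof. intros [H] Hs; now apply H. Qed.

Lemma SN_steps M M' : steps M M' -> SN M -> SN M'.
Proof. intros H; induction H; eauto using SN_step. Qed.

Lemma SN_Var x : SN (Var x).
Proof. constructor; intros y Hy; inversion Hy. Qed.

Lemma SN_Mu b P : SN P -> SN (Mu b P).
Proof.
  induction 1 as [P _ IH]; constructor; intros y Hy; inversion Hy; subst; now apply IH.
Qed.

Lemma SN_apps_inv s M : SN (apps M s) -> SN M.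
Proof.
  intros H; remember (apps M s) as t eqn:Et; revert M Et.
  induction H as [t _ IH]; intros M ->; constructor; intros M' HM.
  eapply IH; [apply step_apps_head, HM | reflexivity].
Qed.

Lemma stack_step_app_l s s' t : stack_step s s' -> stack_step (s ++ t) (s' ++ t).
Proof. induction 1; simpl; now constructor. Qed.

Lemma stack_step_app_r s t t' : stack_step t t' -> stack_step (s ++ t) (s ++ t').
Proof. induction s; intros; simpl; auto using stack_step_there. Qed.

Lemma stack_step_length s s' : stack_step s s' -> length s' = length s.
Proof. induction 1; simpl; auto. Qed.

Lemma stack_step_Forall_SN s s' : stack_step s s' -> Forall SN s -> Forall SN s'.
Proof.
  induction 1; intros HF; inversion HF; subst; constructor; eauto using SN_step.
Qed.

Lemma stack_step_apps s s' M : stack_step s s' -> step (apps M s) (apps M s').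
Proof.
  intros H; revert M; induction H; intros M; simpl; auto.
  now apply step_apps_head, step_appr.
Qed.

Lemma SN_stack_cons N s : SN N -> SN_stack s -> SN_stack (N :: s).
Proof.
  intros HN; revert s; induction HN as [N _ IHN]; intros s Hs.
  induction Hs as [s Hs IHs]; constructor; intros t Ht; inversion Ht; subst.
  - apply IHN; auto; now constructor.
  - now apply IHs.
Qed.

Lemma Forall_SN_stack s : Forall SN s -> SN_stack s.
Proof.
  induction 1; [constructor; intros t Ht; inversion Ht | now apply SN_stack_cons].
Qed.

Lemma step_apps_Var_inv s x Y : step (apps (Var x) s) Y ->
  exists s', stack_step s s' /\ Y = apps (Var x) s'.
Proof.
  revert Y; induction s as [|N s IH] using rev_ind; intros Y H; [inversion H|].
  rewrite apps_snoc in H; inversion H; subst.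
  - destruct s using rev_ind; [discriminate|]; rewrite apps_snoc in *; discriminate.
  - destruct s using rev_ind; [discriminate|]; rewrite apps_snoc in *; discriminate.
  - destruct (IH _ H3) as [s' [Hs ->]]; exists (s' ++ [N]).
    rewrite apps_snoc; auto using stack_step_app_l.
  - exists (s ++ [N']); rewrite apps_snoc; auto using stack_step_app_r, stack_step_here.
Qed.

Lemma SN_apps_Var s x : Forall SN s -> SN (apps (Var x) s).
Proof.
  intros H; apply Forall_SN_stack in H; induction H as [s _ IH].
  constructor; intros y Hy; destruct (step_apps_Var_inv _ _ _ Hy) as [s' [Hs ->]].
  now apply IH.
Qed.

Lemma step_apps_beta_inv s M N Y : step (apps (App (Lam M) N) s) Y ->
  (exists M', step M M' /\ Y = apps (App (Lam M') N) s) \/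
  (exists N', step N N' /\ Y = apps (App (Lam M) N') s) \/
  (exists s', stack_step s s' /\ Y = apps (App (Lam M) N) s') \/
  Y = apps (subst 0 N M) s.
Proof.
  revert Y; induction s as [|L s IH] using rev_ind; intros Y H.
  - simpl in H; inversion H; subst.
    + now do 3 right.
    + inversion H3; subst; left; eauto.
    + right; left; eauto.
  - rewrite apps_snoc in H; inversion H; subst;
      try (destruct (apps_App_is_App s (Lam M) N) as [A [B E]]; congruence).
    + destruct (IH _ H3) as [[M1 [? ->]]|[[N1 [? ->]]|[[s1 [? ->]]| ->]]];
        [left; exists M1 | right; left; exists N1 | do 2 right; left; exists (s1 ++ [L])
        | do 3 right]; rewrite ?apps_snoc; auto using stack_step_app_l.
    + do 2 right; left; exists (s ++ [N']); rewrite apps_snoc.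
      auto using stack_step_app_r, stack_step_here.
Qed.

Lemma subst_steps_arg M N N' : step N N' -> steps (subst 0 N M) (subst 0 N' M).
Proof.
  intros H; rewrite !subst_as_inst; apply inst_steps_env; [|constructor].
  intros [|x]; unfold subst_sub; simpl; [now apply rt_step | apply rt_refl].
Qed.

Lemma SN_beta_expansion M N s :
  SN N -> SN (apps (subst 0 N M) s) -> SN (apps (App (Lam M) N) s).
Proof.
  intros HN; revert M s; induction HN as [N _ IHN]; intros M s Ht.
  remember (apps (subst 0 N M) s) as t eqn:Et; revert M s Et.
  induction Ht as [t Ht IHt]; intros M s ->; constructor; intros Y HY.
  destruct (step_apps_beta_inv _ _ _ _ HY) as [[M' [H ->]]|[[N' [H ->]]|[[s' [H ->]]| ->]]].
  - eapply IHt; [|reflexivity]; apply step_apps_head.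
    rewrite !subst_as_inst; now apply step_inst.
  - apply IHN; auto; apply SN_steps with (apps (subst 0 N M) s); [|now constructor].
    apply (steps_map (fun z => apps z s)); auto using step_apps_head, subst_steps_arg.
  - eapply IHt; [|reflexivity]; now apply stack_step_apps.
  - now constructor.
Qed.

Fixpoint fire_all (b : nat) (P : term) (s : list term) : term :=
  match s with [] => Mu b P | N :: s' => fire_all b (mu_fire b P N) s' end.

Lemma step_apps_Mu_inv s b P Y : step (apps (Mu b P) s) Y ->
  (exists P', step P P' /\ Y = apps (Mu b P') s) \/
  (exists s', stack_step s s' /\ Y = apps (Mu b P) s') \/
  (exists N s', s = N :: s' /\ Y = apps (Mu b (mu_fire b P N)) s').
Proof.
  revert Y; induction s as [|L s IH] using rev_ind; intros Y H.
  - simpl in H; inversion H; subst; left; eauto.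
  - rewrite apps_snoc in H; inversion H; subst.
    + destruct s as [|N s]; [discriminate|].
      destruct (apps_App_is_App s (Mu b P) N) as [A [B E]]; simpl in *; congruence.
    + destruct s as [|N s];
        [| destruct (apps_App_is_App s (Mu b P) N) as [A [B E]]; simpl in *; congruence].
      injection H1 as -> ->; do 2 right; now exists L, [].
    + destruct (IH _ H3) as [[P1 [? ->]]|[[s1 [? ->]]|[N [s1 [-> ->]]]]];
        [left; exists P1 | right; left; exists (s1 ++ [L]) | do 2 right; exists N, (s1 ++ [L])];
        rewrite ?apps_snoc; auto using stack_step_app_l.
    + right; left; exists (s ++ [N']); rewrite apps_snoc.
      auto using stack_step_app_r, stack_step_here.
Qed.

Lemma step_mu_fire_body b P P' N : step P P' -> step (mu_fire b P N) (mu_fire b P' N).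
Proof.
  intros H; assert (Hs : step (ssub 0 (lift_n 0 N) P) (ssub 0 (lift_n 0 N) P'))
    by (rewrite !ssub_as_inst; now apply step_inst).
  unfold mu_fire; destruct (b =? 0); auto using step_appl.
Qed.

Lemma steps_mu_fire_arg b P N N' : step N N' -> steps (mu_fire b P N) (mu_fire b P N').
Proof.
  intros H.
  assert (HN : steps (lift_n 0 N) (lift_n 0 N'))
    by (rewrite !lift_n_as_inst; now apply rt_step, step_inst).
  assert (HP : steps (ssub 0 (lift_n 0 N) P) (ssub 0 (lift_n 0 N') P)).
  { rewrite !ssub_as_inst; apply inst_steps_env; [intros; apply rt_refl|].
    intros n; unfold single_stk; destruct (n =? 0); auto. }
  unfold mu_fire; destruct (b =? 0); auto using steps_App.
Qed.

Lemma step_fire_all s b P P' : step P P' -> step (fire_all b P s) (fire_all b P' s).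
Proof. revert P P'; induction s; intros; simpl; auto using step_mu_body, step_mu_fire_body. Qed.

Lemma steps_fire_all_stack s s' b P :
  stack_step s s' -> steps (fire_all b P s) (fire_all b P s').
Proof.
  intros H; revert P; induction H; intros P; simpl; auto.
  apply (steps_map (fun z => fire_all b z s)); auto using step_fire_all, steps_mu_fire_arg.
Qed.

Lemma steps_eq_or_plus M N :
  steps M N -> M = N \/ clos_trans term (fun N M => step M N) N M.
Proof.
  induction 1 as [M N H| |M N P _ [->|HMN] _ [->|HNP]]; auto using t_step.
  right; eauto using t_trans.
Qed.

(* Induction on the reduct obtained by firing [s] (transitively, since a step
   in [s] may take zero steps there), then on the length of [s] (consumed by
   the mu-steps), then on the reductions inside [s]. *)
Lemma SN_mu_expansion s b P :
  Forall SN s -> SN (fire_all b P s) -> SN (apps (Mu b P) s).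
Proof.
  intros Hs Ht; apply Acc_clos_trans in Ht.
  remember (fire_all b P s) as t eqn:Et; revert s b P Hs Et.
  induction Ht as [t _ IHt]; intros s.
  remember (length s) as n eqn:En; revert s En.
  induction n as [n IHn] using lt_wf_ind; intros s En b P Hs Et.
  pose proof (Forall_SN_stack _ Hs) as Hstk; revert b P Hs Et.
  induction Hstk as [s _ IHs]; intros b P Hs ->; constructor; intros Y HY.
  destruct (step_apps_Mu_inv _ _ _ _ HY) as [[P' [H ->]]|[[s' [H ->]]|[N [s' [-> ->]]]]].
  - eapply IHt; [apply t_step, step_fire_all, H | auto | reflexivity].
  - destruct (steps_eq_or_plus _ _ (steps_fire_all_stack _ _ b P H)) as [E|C].
    + apply (IHs s' H); [now rewrite En, (stack_step_length _ _ H) | | exact E].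
      eapply stack_step_Forall_SN; eauto.
    + eapply IHt; [exact C | eapply stack_step_Forall_SN; eauto | reflexivity].
  - inversion Hs; subst.
    eapply (IHn (length s')); [simpl in *; lia | reflexivity | auto | reflexivity].
Qed.

(** * Interpretation of types *)

Definition SN_under_ren (s : list term) : Prop :=
  forall ξ θ, Forall SN (map (ren ξ θ) s).

Definition SN_against (P : list term -> Prop) (M : term) : Prop :=
  forall ξ θ s, P s -> SN (apps (ren ξ θ M) s).

Definition cons_sem (A : term -> Prop) (P : list term -> Prop) (s : list term) : Prop :=
  exists N s', s = N :: s' /\ A N /\ P s'.

Fixpoint dsem (d : dty) : term -> Prop :=
  match d with
  | Nu | ArrO => SN_against SN_under_ren
  | Arr k => SN_against (csem k)
  | DMeet d1 d2 => fun M => dsem d1 M /\ dsem d2 M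
  end
with csem (k : cty) : list term -> Prop :=
  match k with
  | PairO d => cons_sem (dsem d) SN_under_ren
  | Pair d k' => cons_sem (dsem d) (csem k')
  | CMeet k1 k2 => fun s => csem k1 s /\ csem k2 s
  end.

Fixpoint cdepth (k : cty) : nat :=
  match k with
  | PairO _ => 1
  | Pair _ k' => S (cdepth k')
  | CMeet k1 k2 => max (cdepth k1) (cdepth k2)
  end.

Lemma SN_under_ren_ren s ξ θ : SN_under_ren s -> SN_under_ren (map (ren ξ θ) s).
Proof.
  intros H ξ' θ'; rewrite map_map.
  rewrite (map_ext _ _ (fun M => ren_ren M ξ θ ξ' θ')); apply H.
Qed.

Lemma SN_under_ren_Forall s : SN_under_ren s -> Forall SN s.
Proof.
  intros H; specialize (H (fun x => x) (fun n => n)).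
  now rewrite (map_ext _ _ ren_id), map_id in H.
Qed.

Lemma SN_under_ren_nil : SN_under_ren [].
Proof. intros ξ θ; constructor. Qed.

Lemma SN_under_ren_vars n : SN_under_ren (repeat (Var 0) n).
Proof. intros ξ θ; induction n as [|n IH]; constructor; [exact (SN_Var (ξ 0)) | exact IH]. Qed.

Lemma SN_against_ren P M ξ θ : SN_against P M -> SN_against P (ren ξ θ M).
Proof. intros H ξ' θ' s Hs; rewrite ren_ren; now apply H. Qed.

Lemma SN_against_SN P M s : SN_against P M -> P s -> SN M.
Proof.
  intros H Hs; specialize (H (fun x => x) (fun n => n) s Hs).
  rewrite ren_id in H; exact (SN_apps_inv _ _ H).
Qed.

Lemma SN_against_Var P x : (forall s, P s -> Forall SN s) -> SN_against P (Var x).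
Proof. intros HP ξ θ s Hs; apply SN_apps_Var; auto. Qed.

Lemma cons_sem_mono (A A' : term -> Prop) (P P' : list term -> Prop) s :
  (forall N, A N -> A' N) -> (forall s', P s' -> P' s') ->
  cons_sem A P s -> cons_sem A' P' s.
Proof. intros HA HP [N [s' [-> [HN Hs']]]]; exists N, s'; auto. Qed.

Lemma cons_sem_meet A A' P P' s :
  cons_sem A P s -> cons_sem A' P' s ->
  cons_sem (fun N => A N /\ A' N) (fun s' => P s' /\ P' s') s.
Proof.
  intros [N [s' [-> [HN Hs']]]] [N1 [s1 [E [HN1 Hs1]]]]; injection E as <- <-.
  exists N, s'; auto.
Qed.

Scheme dty_mut := Induction for dty Sort Prop
with cty_mut := Induction for cty Sort Prop.
Combined Scheme ty_mutind from dty_mut, cty_mut.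

Lemma sem_good :
  (forall d, (forall M, dsem d M -> SN M) /\ (forall x, dsem d (Var x))) /\
  (forall k, (forall s, csem k s -> Forall SN s) /\
             (forall n, cdepth k <= n -> csem k (repeat (Var 0) n))).
Proof.
  assert (Hatom : (forall M, SN_against SN_under_ren M -> SN M) /\
                  (forall x, SN_against SN_under_ren (Var x))).
  { split; [intros M H; exact (SN_against_SN _ _ _ H SN_under_ren_nil)|].
    intros x; apply SN_against_Var, SN_under_ren_Forall. }
  apply ty_mutind; simpl.
  - exact Hatom.
  - exact Hatom.
  - intros k [Hk Hvars]; split.
    + intros M H; exact (SN_against_SN _ _ _ H (Hvars _ (le_n _))).
    + intros x; now apply SN_against_Var.
  - intros d1 [SN1 V1] d2 [SN2 V2]; split; [intros M [H1 _] | intros x]; auto.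
  - intros d [Hd Vd]; split.
    + intros s [N [s' [-> [HN Hs']]]]; auto using SN_under_ren_Forall.
    + intros [|n] Hn; [lia|]; exists (Var 0), (repeat (Var 0) n).
      auto using SN_under_ren_vars.
  - intros d [Hd Vd] k [Hk Vk]; split.
    + intros s [N [s' [-> [HN Hs']]]]; auto.
    + intros [|n] Hn; [lia|]; exists (Var 0), (repeat (Var 0) n).
      split; [reflexivity|]; split; [apply Vd | apply Vk; lia].
  - intros k1 [H1 V1] k2 [H2 V2]; split.
    + intros s [Hs _]; auto.
    + intros n Hn; split; [apply V1 | apply V2]; lia.
Qed.

Lemma dsem_SN d M : dsem d M -> SN M.
Proof. apply (proj1 sem_good d). Qed.

Lemma dsem_Var d x : dsem d (Var x).
Proof. apply (proj1 sem_good d). Qed.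

Lemma csem_Forall_SN k s : csem k s -> Forall SN s.
Proof. apply (proj2 sem_good k). Qed.

Lemma dsem_ren d M ξ θ : dsem d M -> dsem d (ren ξ θ M).
Proof.
  revert M; induction d; simpl; intros M; auto using SN_against_ren.
  intros [H1 H2]; auto.
Qed.

Lemma csem_ren k s ξ θ : csem k s -> csem k (map (ren ξ θ) s).
Proof.
  revert s; induction k as [d|d k IH|k1 IH1 k2 IH2]; simpl;
    [intros s [N [s' [-> [HN Hs']]]] .. | intros s [H1 H2]; auto].
  - exists (ren ξ θ N), (map (ren ξ θ) s'); auto using dsem_ren, SN_under_ren_ren.
  - exists (ren ξ θ N), (map (ren ξ θ) s'); auto using dsem_ren.
Qed.

Lemma SN_under_ren_cons d N s : dsem d N -> SN_under_ren s -> SN_under_ren (N :: s).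
Proof.
  intros HN Hs ξ θ; constructor; [|apply Hs].
  exact (dsem_SN d _ (dsem_ren d N ξ θ HN)).
Qed.

Scheme dle_mut := Induction for dle Sort Prop
with cle_mut := Induction for cle Sort Prop.
Combined Scheme le_mutind from dle_mut, cle_mut.

Lemma le_sem :
  (forall d1 d2, dle d1 d2 -> forall M, dsem d1 M -> dsem d2 M) /\
  (forall k1 k2, cle k1 k2 -> forall s, csem k1 s -> csem k2 s).
Proof.
  apply le_mutind; simpl; intros; try solve [eauto | tauto].
  - intros ξ θ s Hs; auto.
  - eapply cons_sem_mono; [| |eassumption]; [auto|].
    intros s' [N [s'' [-> [HN Hs'']]]]; eauto using SN_under_ren_cons.
  - destruct H as [H1 H2]; eapply cons_sem_mono; [| |exact (cons_sem_meet _ _ _ _ _ H1 H2)].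
    + auto.
    + intros s' [_ Hs']; exact Hs'.
  - destruct H as [H1 H2]; exact (cons_sem_meet _ _ _ _ _ H1 H2).
  - eapply cons_sem_mono; eauto.
  - eapply cons_sem_mono; eauto.
Qed.

(** * Adequacy *)

Lemma SN_against_apps P M s : SN_against P M -> P s -> SN (apps M s).
Proof.
  intros H Hs; specialize (H (fun x => x) (fun n => n) s Hs).
  now rewrite ren_id in H.
Qed.

Lemma SN_against_App d P M N :
  SN_against (cons_sem (dsem d) P) M -> dsem d N -> SN_against P (App M N).
Proof.
  intros HM HN ξ θ s Hs; rewrite ren_App; apply (HM ξ θ (ren ξ θ N :: s)).
  exists (ren ξ θ N), s; auto using dsem_ren.
Qed.

Definition sub_ok (G : list dty) (σ : nat -> term) : Prop :=
  forall x d, nth_error G x = Some d -> dsem d (σ x).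

(* The empty stack is admitted so that the identity instantiation is allowed. *)
Definition stk_ok (D : list cty) (τ : nat -> list term) : Prop :=
  forall n k, nth_error D n = Some k -> τ n = [] \/ csem k (τ n).

Definition sem_typed (G : list dty) (M : term) (d : dty) (D : list cty) : Prop :=
  forall σ θ τ, sub_ok G σ -> stk_ok D τ -> dsem d (inst σ θ τ M).

Lemma sub_ok_ren G σ ξ θ : sub_ok G σ -> sub_ok G (fun x => ren ξ θ (σ x)).
Proof. intros H x d Hx; apply dsem_ren; auto. Qed.

Lemma stk_ok_ren D τ ξ θ : stk_ok D τ -> stk_ok D (fun n => map (ren ξ θ) (τ n)).
Proof.
  intros H n k Hn; destruct (H n k Hn) as [-> | Hk]; [now left | right].
  now apply csem_ren.
Qed.

Lemma sub_ok_scons G d σ N : sub_ok G σ -> dsem d N -> sub_ok (d :: G) (scons N σ).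
Proof. intros Hσ HN [|x] e Hx; simpl in Hx; [now injection Hx as <- | exact (Hσ x e Hx)]. Qed.

Lemma SN_against_inst (P : list term -> Prop) G D M :
  (forall σ θ τ s, sub_ok G σ -> stk_ok D τ -> P s -> SN (apps (inst σ θ τ M) s)) ->
  forall σ θ τ, sub_ok G σ -> stk_ok D τ -> SN_against P (inst σ θ τ M).
Proof.
  intros H σ θ τ Hσ Hτ ξ θ' s Hs; rewrite ren_inst.
  apply H; auto using sub_ok_ren, stk_ok_ren.
Qed.

Lemma SN_apps_inst_Lam (P : list term -> Prop) G D d M σ θ τ N s :
  (forall σ θ τ, sub_ok (d :: G) σ -> stk_ok D τ -> SN_against P (inst σ θ τ M)) ->
  sub_ok G σ -> stk_ok D τ -> dsem d N -> P s ->
  SN (apps (inst σ θ τ (Lam M)) (N :: s)).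
Proof.
  intros HM Hσ Hτ HN Hs; simpl.
  apply SN_beta_expansion; [exact (dsem_SN d N HN)|].
  rewrite subst_inst_up_lam; apply (SN_against_apps P); auto using sub_ok_scons.
Qed.

Definition up_mu_stk_with (τ : nat -> list term) (L : list term) : nat -> list term :=
  fun n => match n with 0 => map (lift_n 0) L | S m => map (lift_n 0) (τ m) end.

(* The body of [inst σ θ τ (Mu b M)] after [L] has been fed to the mu. *)
Definition mu_body σ θ τ (L : list term) (b : nat) (M : term) : term :=
  apps (inst (up_mu_sub σ) (up_ren θ) (up_mu_stk_with τ L) M) (up_mu_stk_with τ L b).

Lemma inst_Mu σ θ τ b M : inst σ θ τ (Mu b M) = Mu (up_ren θ b) (mu_body σ θ τ [] b M).
Proof. reflexivity. Qed.

Lemma mu_fire_mu_body σ θ τ L b M N :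
  mu_fire (up_ren θ b) (mu_body σ θ τ L b M) N = mu_body σ θ τ (L ++ [N]) b M.
Proof.
  assert (Hfire : ssub 0 (lift_n 0 N) (inst (up_mu_sub σ) (up_ren θ) (up_mu_stk_with τ L) M)
                  = inst (up_mu_sub σ) (up_ren θ) (up_mu_stk_with τ (L ++ [N])) M).
  { rewrite ssub_as_inst, inst_inst; apply inst_ext; [| reflexivity |].
    - intros x; simpl; unfold up_mu_sub; rewrite <- ssub_as_inst; apply ssub_lift_n.
    - intros [|n]; unfold comp_stk, single_stk; simpl.
      + rewrite map_app; f_equal; rewrite <- (map_ssub_lift_n L (lift_n 0 N)) at 2.
        apply map_ext; intros; now rewrite ssub_as_inst.
      + rewrite app_nil_r; rewrite <- (map_ssub_lift_n (τ n) (lift_n 0 N)) at 2.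
        apply map_ext; intros; now rewrite ssub_as_inst. }
  unfold mu_body, mu_fire; destruct b as [|b]; simpl; rewrite ssub_apps, Hfire.
  - now rewrite map_ssub_lift_n, <- apps_snoc, map_app.
  - now rewrite map_ssub_lift_n.
Qed.

Lemma fire_all_mu_body s σ θ τ L b M :
  fire_all (up_ren θ b) (mu_body σ θ τ L b M) s = Mu (up_ren θ b) (mu_body σ θ τ (L ++ s) b M).
Proof.
  revert L; induction s as [|N s IH]; intros L; simpl.
  - now rewrite app_nil_r.
  - now rewrite mu_fire_mu_body, IH, <- app_assoc.
Qed.

Lemma stk_ok_up_mu_with D k τ s :
  stk_ok D τ -> csem k s -> stk_ok (k :: D) (up_mu_stk_with τ s).
Proof.
  intros Hτ Hs [|n] k' Hn; simpl in Hn.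
  - injection Hn as <-; right; simpl; rewrite (map_ext _ _ (fun X => lift_n_ren X 0)).
    now apply csem_ren.
  - destruct (Hτ n k' Hn) as [E | Hk]; simpl; rewrite ?E; [now left | right].
    rewrite (map_ext _ _ (fun X => lift_n_ren X 0)); now apply csem_ren.
Qed.

Lemma sub_ok_up_mu G σ : sub_ok G σ -> sub_ok G (up_mu_sub σ).
Proof. intros Hσ x d Hx; unfold up_mu_sub; rewrite lift_n_ren; apply dsem_ren; auto. Qed.

Lemma sem_Mu G D k kb b M :
  nth_error (k :: D) b = Some kb ->
  sem_typed G M (Arr kb) (k :: D) -> sem_typed G (Mu b M) (Arr k) D.
Proof.
  intros Hb HM; red; apply (SN_against_inst (csem k)); intros σ θ τ s Hσ Hτ Hs.
  rewrite inst_Mu; apply SN_mu_expansion; [exact (csem_Forall_SN k s Hs)|].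
  rewrite fire_all_mu_body; apply SN_Mu; simpl app.
  pose proof (stk_ok_up_mu_with D k τ s Hτ Hs) as Hτ'.
  specialize (HM _ (up_ren θ) _ (sub_ok_up_mu G σ Hσ) Hτ'); unfold mu_body.
  destruct (Hτ' b kb Hb) as [-> | Hkb].
  - exact (dsem_SN (Arr kb) _ HM).
  - exact (SN_against_apps _ _ _ HM Hkb).
Qed.

Lemma typed_sem G M d D : typed G M d D -> sem_typed G M d D.
Proof.
  induction 1 as [G D x d Hx | G D d k M _ IH | G D d M _ IH
    | G D d k M N _ IHM _ IHN | G D d M N _ IHM _ IHN | G D b k k' M Hb _ IH
    | G D k M _ IH | G D M d d' _ IH Hle | G D M d d' _ IH1 _ IH2].
  - intros σ θ τ Hσ _; now apply Hσ.
  - red; apply (SN_against_inst (csem (Pair d k))); intros σ θ τ s Hσ Hτ [N [s' [-> [HN Hs']]]].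
    exact (SN_apps_inst_Lam _ G D d M σ θ τ N s' IH Hσ Hτ HN Hs').
  - red; apply (SN_against_inst (csem (PairO d))); intros σ θ τ s Hσ Hτ [N [s' [-> [HN Hs']]]].
    exact (SN_apps_inst_Lam _ G D d M σ θ τ N s' IH Hσ Hτ HN Hs').
  - intros σ θ τ Hσ Hτ; exact (SN_against_App d _ _ _ (IHM σ θ τ Hσ Hτ) (IHN σ θ τ Hσ Hτ)).
  - intros σ θ τ Hσ Hτ; exact (SN_against_App d _ _ _ (IHM σ θ τ Hσ Hτ) (IHN σ θ τ Hσ Hτ)).
  - exact (sem_Mu G D k k' (S b) M Hb IH).
  - exact (sem_Mu G D k k 0 M eq_refl IH).
  - intros σ θ τ Hσ Hτ; exact (proj1 le_sem d d' Hle _ (IH σ θ τ Hσ Hτ)).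
  - intros σ θ τ Hσ Hτ; split; auto.
Qed.

Theorem mainTheorem1 :
  forall (M : term) (G : list dty) (d : dty) (D : list cty),
    typed G M d D -> SN M.
Proof.
  intros M G d D H.
  assert (Hid : dsem d (inst (fun x => Var x) (fun n => n) no_stk M)).
  { apply (typed_sem G M d D H).
    - intros x e _; apply dsem_Var.
    - intros n k _; now left. }
  rewrite inst_id in Hid; exact (dsem_SN d M Hid).
Qed.
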